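(* For every time step $\Delta t>0$ and every mesh, let $(\phi_h^n,\psi_h^n,s_h^n)_{n\ge0}$ with $\phi_h^n,\psi_h^n\in V_h$, $s_h^n\in\mathbb R$, satisfy, for all $n\ge 0$ and all $v_h\in V_h$, $$\Big(\tfrac{\phi_h^{n+1}-\phi_h^n}{\Delta t},v_h\Big)=-\Big\{\xi^2(\psi_h^{n+1},v_h)-\xi^2(\nabla\psi_h^{n+1},\nabla v_h)+(u(\phi_h^n),v_h)\,s_h^{n+1}\Big\},$$ $$(\psi_h^{n},v_h)=(\phi_h^{n},v_h)-(\nabla\phi_h^{n},\nabla v_h)\quad(\text{for all }n\ge0),$$ $$s_h^{n+1}-s_h^n=\tfrac12\big(u(\phi_h^n),\phi_h^{n+1}-\phi_h^n\big).$$ Then with the modified energy $\tilde{\mathcal E}(\psi,s):=\frac{\xi^2}{2}\|\psi\|^2+s^2$ one has, for all $n\ge0$, $$\tilde{\mathcal E}(\psi_h^{n+1},s_h^{n+1})-\tilde{\mathcal E}(\psi_h^{n},s_h^{n})=-\Big\{\tfrac1{\Delta t}\|\phi_h^{n+1}-\phi_h^n\|^2+\tfrac{\xi^2}{2}\|\psi_h^{n+1}-\psi_h^n\|^2+(s_h^{n+1}-s_h^n)^2\Big\}\le0,$$ i.e. the scheme is unconditionally energy stable with respect to $\tilde{\mathcal E}$.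
   Context: $\Omega\subset\mathbb R^2$ is a bounded convex domain with Lipschitz boundary; $(\cdot,\cdot)$ and $\|\cdot\|$ denote the $L^2(\Omega)$ inner product and norm. $\xi,\alpha,\gamma$ are real parameters, $\mathcal N(\phi)=\frac{\alpha}{2}\phi^2-\frac{\gamma}{6}\phi^3+\frac{1}{24}\phi^4$, $\mathcal E_1(\phi)=\int_\Omega\mathcal N(\phi)\,d\mathbf r$, $D_0$ is a constant with $\mathcal E_1(\phi)+D_0>0$ for the arguments considered, and $u(\phi):=\mathcal N'(\phi)/\sqrt{\mathcal E_1(\phi)+D_0}$. $\mathcal T_h$ is a conforming triangulation of $\Omega$ and $V_h=\{w\in H^1(\Omega): w|_\tau\in P_1(\tau)\ \forall\tau\in\mathcal T_h\}$ is the continuous piecewise linear finite element space. *)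

From Stdlib Require Import Reals.
Open Scope R_scope.

(* Real-valued functions on the plane (finite element functions, L^2 functions). *)
Definition fn := ((R * R)%type -> R).

Definition Nf (alpha gamma x : R) : R :=
  alpha / 2 * x ^ 2 - gamma / 6 * x ^ 3 + / 24 * x ^ 4.
Definition dNf (alpha gamma x : R) : R :=
  alpha * x - gamma / 2 * x ^ 2 + / 6 * x ^ 3.

Definition lincomb (a : R) (f : fn) (b : R) (g : fn) : fn :=
  fun p => a * f p + b * g p.

(* integ plays the role of  f |-> \int_Omega f  *)
Definition l2ip (integ : fn -> R) (f g : fn) : R := integ (fun p => f p * g p).
Definition l2norm2 (integ : fn -> R) (f : fn) : R := l2ip integ f f.

Definition gradip (integ : fn -> R) (grad : fn -> (R * R)%type -> (R * R)%type)
  (f g : fn) : R :=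
  integ (fun p => fst (grad f p) * fst (grad g p) + snd (grad f p) * snd (grad g p)).

Definition Eone (integ : fn -> R) (alpha gamma : R) (phi : fn) : R :=
  integ (fun p => Nf alpha gamma (phi p)).

Definition ufun (integ : fn -> R) (alpha gamma D0 : R) (phi : fn) : fn :=
  fun p => dNf alpha gamma (phi p) / sqrt (Eone integ alpha gamma phi + D0).

Definition Etilde (integ : fn -> R) (xi : R) (psi : fn) (s : R) : R :=
  xi ^ 2 / 2 * l2norm2 integ psi + s ^ 2.

(* Test the phi-equation with the increment phi^{n+1} - phi^n.  The psi-equation at
   steps n and n+1, tested with psi^{n+1}, turns the xi^2 term into
   xi^2 (psi^{n+1} - psi^n, psi^{n+1}), and the s-equation turns the nonlocal term
   into 2 (s^{n+1} - s^n) s^{n+1}.  The identity 2 (a - b) a = a^2 - b^2 + (a - b)^2,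
   applied to both, yields the energy equality; every dissipated term is a square. *)
From Stdlib Require Import Reals Lra FunctionalExtensionality.
Open Scope R_scope.

Lemma l2ip_comm (integ : fn -> R) (f g : fn) : l2ip integ f g = l2ip integ g f.
Proof.
  unfold l2ip; f_equal; apply functional_extensionality; intro p; ring.
Qed.

Lemma gradip_comm (integ : fn -> R) grad (f g : fn) :
  gradip integ grad f g = gradip integ grad g f.
Proof.
  unfold gradip; f_equal; apply functional_extensionality; intro p; ring.
Qed.

Section FiniteElementSpace.

Variables (integ : fn -> R) (Int : fn -> Prop) (Vh : fn -> Prop).
Variable grad : fn -> (R * R)%type -> (R * R)%type.

Hypothesis integ_lincomb : forall f g a b, Int f -> Int g ->
  Int (lincomb a f b g) /\ integ (lincomb a f b g) = a * integ f + b * integ g.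
Hypothesis integ_nonneg : forall f, Int f -> (forall p, 0 <= f p) -> 0 <= integ f.
Hypothesis Vh_lincomb : forall f g a b, Vh f -> Vh g -> Vh (lincomb a f b g).
Hypothesis grad_lincomb : forall f g a b p, Vh f -> Vh g ->
  grad (lincomb a f b g) p =
    (a * fst (grad f p) + b * fst (grad g p), a * snd (grad f p) + b * snd (grad g p)).
Hypothesis Int_mul : forall f g, Vh f -> Vh g -> Int (fun p => f p * g p).
Hypothesis Int_gradip : forall f g, Vh f -> Vh g ->
  Int (fun p => fst (grad f p) * fst (grad g p) + snd (grad f p) * snd (grad g p)).

Lemma l2ip_lincomb_r f g h a b : Vh f -> Vh g -> Vh h ->
  l2ip integ f (lincomb a g b h) = a * l2ip integ f g + b * l2ip integ f h.
Proof.
  intros Hf Hg Hh; unfold l2ip.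
  replace (fun p => f p * lincomb a g b h p)
    with (lincomb a (fun p => f p * g p) b (fun p => f p * h p)).
  - apply integ_lincomb; auto.
  - apply functional_extensionality; intro p; unfold lincomb; ring.
Qed.

Lemma l2ip_lincomb_l f g h a b : Vh f -> Vh g -> Vh h ->
  l2ip integ (lincomb a g b h) f = a * l2ip integ g f + b * l2ip integ h f.
Proof.
  intros Hf Hg Hh.
  rewrite l2ip_comm, l2ip_lincomb_r, (l2ip_comm _ f g), (l2ip_comm _ f h) by assumption.
  reflexivity.
Qed.

Lemma gradip_lincomb_l f g h a b : Vh f -> Vh g -> Vh h ->
  gradip integ grad (lincomb a g b h) f =
    a * gradip integ grad g f + b * gradip integ grad h f.
Proof.
  intros Hf Hg Hh; unfold gradip.
  replace (fun p => fst (grad (lincomb a g b h) p) * fst (grad f p)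
                    + snd (grad (lincomb a g b h) p) * snd (grad f p))
    with (lincomb a (fun p => fst (grad g p) * fst (grad f p) + snd (grad g p) * snd (grad f p))
                  b (fun p => fst (grad h p) * fst (grad f p) + snd (grad h p) * snd (grad f p))).
  - apply integ_lincomb; auto.
  - apply functional_extensionality; intro p.
    rewrite grad_lincomb by assumption; unfold lincomb; simpl; ring.
Qed.

Lemma l2norm2_ge0 f : Vh f -> 0 <= l2norm2 integ f.
Proof.
  intro Hf; apply integ_nonneg; auto.
  intro p; apply Rle_0_sqr.
Qed.

Lemma l2norm2_sub f g : Vh f -> Vh g ->
  l2norm2 integ (lincomb 1 f (-1) g) =
    l2ip integ f f - 2 * l2ip integ f g + l2ip integ g g.
Proof.
  intros Hf Hg; unfold l2norm2.
  rewrite l2ip_lincomb_l, !l2ip_lincomb_r, (l2ip_comm _ g f) by auto; ring.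
Qed.

Lemma l2ip_sub_polarization f g : Vh f -> Vh g ->
  2 * l2ip integ (lincomb 1 f (-1) g) f =
    l2norm2 integ f - l2norm2 integ g + l2norm2 integ (lincomb 1 f (-1) g).
Proof.
  intros Hf Hg; rewrite l2norm2_sub, l2ip_lincomb_l by assumption.
  unfold l2norm2; rewrite (l2ip_comm _ g f); ring.
Qed.

(* The discrete elliptic relation psi = phi - Delta_h phi, tested with w, is linear in
   (phi, psi), so it passes to increments. *)
Lemma elliptic_relation_increment phi1 phi0 psi1 psi0 w :
  Vh phi1 -> Vh phi0 -> Vh psi1 -> Vh psi0 -> Vh w ->
  l2ip integ psi1 w = l2ip integ phi1 w - gradip integ grad phi1 w ->
  l2ip integ psi0 w = l2ip integ phi0 w - gradip integ grad phi0 w ->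
  l2ip integ (lincomb 1 phi1 (-1) phi0) w - gradip integ grad (lincomb 1 phi1 (-1) phi0) w =
    l2ip integ (lincomb 1 psi1 (-1) psi0) w.
Proof.
  intros H1 H0 K1 K0 Hw E1 E0.
  rewrite !l2ip_lincomb_l, gradip_lincomb_l, E1, E0 by assumption; ring.
Qed.

End FiniteElementSpace.

Lemma sq_increment_identity (a b : R) : 2 * (a - b) * a = a ^ 2 - b ^ 2 + (a - b) ^ 2.
Proof. ring. Qed.

Theorem theorem3p1
  (xi alpha gamma D0 dt : R)
  (integ : fn -> R) (Int : fn -> Prop)
  (Vh : fn -> Prop) (grad : fn -> (R * R)%type -> (R * R)%type)
  (* integ is a linear, positive functional on the integrable functions Int *)
  (Hint_lin : forall f g a b, Int f -> Int g ->
     Int (lincomb a f b g) /\ integ (lincomb a f b g) = a * integ f + b * integ g)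
  (Hint_pos : forall f, Int f -> (forall p, 0 <= f p) -> 0 <= integ f)
  (* V_h is a linear space, the gradient is linear on it *)
  (HVh : forall f g a b, Vh f -> Vh g -> Vh (lincomb a f b g))
  (Hgrad : forall f g a b p, Vh f -> Vh g ->
     grad (lincomb a f b g) p =
       (a * fst (grad f p) + b * fst (grad g p), a * snd (grad f p) + b * snd (grad g p)))
  (* integrability of the integrands occurring in the scheme *)
  (Hint_VV : forall f g, Vh f -> Vh g -> Int (fun p => f p * g p))
  (Hint_grad : forall f g, Vh f -> Vh g ->
     Int (fun p => fst (grad f p) * fst (grad g p) + snd (grad f p) * snd (grad g p)))
  (Hint_u : forall f v, Vh f -> Vh v -> Int (fun p => ufun integ alpha gamma D0 f p * v p))
  (Hdt : 0 < dt)
  (phi psi : nat -> fn) (s : nat -> R)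
  (Hphi : forall n, Vh (phi n)) (Hpsi : forall n, Vh (psi n))
  (HD0 : forall n, Eone integ alpha gamma (phi n) + D0 > 0)
  (Heq1 : forall n v, Vh v ->
     l2ip integ (lincomb (/ dt) (phi (S n)) (- / dt) (phi n)) v =
     - (xi ^ 2 * l2ip integ (psi (S n)) v
        - xi ^ 2 * gradip integ grad (psi (S n)) v
        + l2ip integ (ufun integ alpha gamma D0 (phi n)) v * s (S n)))
  (Heq2 : forall n v, Vh v ->
     l2ip integ (psi n) v = l2ip integ (phi n) v - gradip integ grad (phi n) v)
  (Heq3 : forall n,
     s (S n) - s n =
     / 2 * l2ip integ (ufun integ alpha gamma D0 (phi n)) (lincomb 1 (phi (S n)) (-1) (phi n))) :
  forall n,
    Etilde integ xi (psi (S n)) (s (S n)) - Etilde integ xi (psi n) (s n) =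
      - (/ dt * l2norm2 integ (lincomb 1 (phi (S n)) (-1) (phi n))
         + xi ^ 2 / 2 * l2norm2 integ (lincomb 1 (psi (S n)) (-1) (psi n))
         + (s (S n) - s n) ^ 2)
    /\
    - (/ dt * l2norm2 integ (lincomb 1 (phi (S n)) (-1) (phi n))
       + xi ^ 2 / 2 * l2norm2 integ (lincomb 1 (psi (S n)) (-1) (psi n))
       + (s (S n) - s n) ^ 2) <= 0.
Proof.
  intro n.
  set (dphi := lincomb 1 (phi (S n)) (-1) (phi n)).
  set (dpsi := lincomb 1 (psi (S n)) (-1) (psi n)).
  assert (Hdphi : Vh dphi) by (apply HVh; auto).
  assert (Hdpsi : Vh dpsi) by (apply HVh; auto).
  assert (Htime : l2ip integ (lincomb (/ dt) (phi (S n)) (- / dt) (phi n)) dphi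
                  = / dt * l2norm2 integ dphi).
  { unfold l2norm2, dphi; rewrite !(l2ip_lincomb_l integ Int Vh) by auto; ring. }
  assert (Hdiff : l2ip integ (psi (S n)) dphi - gradip integ grad (psi (S n)) dphi
                  = l2ip integ dpsi (psi (S n))).
  { rewrite l2ip_comm, gradip_comm.
    apply (elliptic_relation_increment integ Int Vh grad); auto. }
  assert (Hpsi_energy := l2ip_sub_polarization integ Int Vh Hint_lin HVh Hint_VV
                           (psi (S n)) (psi n) (Hpsi _) (Hpsi _)).
  assert (Hs_energy := sq_increment_identity (s (S n)) (s n)).
  pose proof (Heq1 n dphi Hdphi) as Hscheme.
  rewrite Htime, <- Rmult_minus_distr_l, Hdiff in Hscheme.
  pose proof (Heq3 n) as Hsav; fold dphi in Hsav; fold dpsi in Hpsi_energy.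
  replace (l2ip integ (ufun integ alpha gamma D0 (phi n)) dphi) with (2 * (s (S n) - s n))
    in Hscheme by lra.
  replace (xi ^ 2 * l2ip integ dpsi (psi (S n))) with
    (xi ^ 2 / 2 * (l2norm2 integ (psi (S n)) - l2norm2 integ (psi n) + l2norm2 integ dpsi))
    in Hscheme by (rewrite <- Hpsi_energy; field).
  assert (0 < / dt) by (apply Rinv_0_lt_compat; exact Hdt).
  assert (0 <= / dt * l2norm2 integ dphi)
    by (apply Rmult_le_pos; [lra | apply (l2norm2_ge0 _ Int Vh); auto]).
  assert (0 <= xi ^ 2 / 2 * l2norm2 integ dpsi).
  { apply Rmult_le_pos; [pose proof (pow2_ge_0 xi); lra |
                         apply (l2norm2_ge0 _ Int Vh); auto]. }
  pose proof (pow2_ge_0 (s (S n) - s n)).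
  unfold Etilde; split; lra.
Qed.
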